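(* Let $n\ge2$ be an integer and $\xi\in\mathbb{R}$. For every algebraic number $\alpha$ of degree $n$ with conjugates $\alpha_1,\dots,\alpha_n$, one has \[ \max_{1\le i\le n} |\xi-\alpha_i| \ge \tfrac12 H(\alpha)^{-2/n}. \]
   Context: The height $H(\alpha)$ of an algebraic number $\alpha\in\mathbb{C}$ is the largest absolute value of the coefficients of its irreducible (minimal) polynomial in $\mathbb{Z}[T]$. The conjugates of $\alpha$ are the roots of this polynomial. *)

From HB Require Import structures.
From mathcomp Require Import all_boot all_order all_algebra.
Set Implicit Arguments. Unset Strict Implicit. Unset Printing Implicit Defensive.
Import Order.TTheory GRing.Theory Num.Theory.
Local Open Scope ring_scope.

(* p : {poly int} is the minimal polynomial of alpha in Z[T]:
   irreducible in Z[T] (= primitive and irreducible over Q) and alpha is a root. *)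
Definition minpolyZ (C : numClosedFieldType) (p : {poly int}) (alpha : C) : Prop :=
  [/\ `|zcontents p| = 1,
      irreducible_poly (map_poly (intr : int -> rat) p)
    & root (map_poly (intr : int -> C) p) alpha].

Definition heightZ (p : {poly int}) : int :=
  \big[Num.max/0]_(i < size p) `|p`_i|.

(* Let p = a T^n + ... be the minimal polynomial of alpha and
   beta_1, ..., beta_n its complex roots, which are simple since p is
   irreducible over Q.  The resultant Res(p', p) is divisible by a, and
   Poisson's formula expresses it through the roots, so that the
   discriminant Res(p', p) / a is a nonzero integer with absolute value
       |a|^(2n-2) * prod_(i <> j) |beta_i - beta_j|  >= 1.
   If every beta_i were closer than H^(-2/n) / 2 to xi, each of the
   n(n-1) distances would be < H^(-2/n), and as |a| <= H the left-hand
   side would be < H^(2n-2) * H^(-2(n-1)) = 1, a contradiction. *)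

From HB Require Import structures.
From mathcomp Require Import all_boot all_order all_algebra.
From mathcomp Require Import zify.
Set Implicit Arguments. Unset Strict Implicit. Unset Printing Implicit Defensive.
Import Order.TTheory GRing.Theory Num.Theory.
Local Open Scope ring_scope.

(* A band of shifted coefficients of s evaluated against the powers of x:
   this is the row-times-column computation behind the Sylvester matrix. *)
Lemma horner_shift_sum (F : fieldType) (N k : nat) (s : {poly F}) (x : F) :
  (size s + k <= N)%N ->
  \sum_(j < N) (s`_(j - k) *+ (k <= j)) * x ^+ j = x ^+ k * s.[x].
Proof.
move=> size_s; rewrite -hornerXn -hornerM mulrC.
rewrite (@horner_coef_wide _ N); last first.
  have [->|s0] := eqVneq s 0; first by rewrite mul0r size_poly0.
  by rewrite size_mulXn // addnC.
apply: eq_bigr => j _; rewrite coefMXn; congr (_ * _).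
by case: ltnP => _; rewrite ?mulr0n ?mulr1n.
Qed.

Section SylvesterVandermonde.

Variables (F : fieldType) (n m : nat) (P Q : {poly F}) (beta : 'I_n -> F).

(* The (n + m)-square Sylvester matrix of (Q, P): n rows of shifted
   coefficients of Q followed by m rows of shifted coefficients of P. *)
Definition sylvester_band : 'M[F]_(n + m) := \matrix_(i, j)
  match split i with
  | inl k => Q`_(j - k) *+ (k <= j)
  | inr k => P`_(j - k) *+ (k <= j)
  end.

Definition vandermonde_ext : 'M[F]_(n + m) := \matrix_(j, c)
  match split c with
  | inl i => beta i ^+ j
  | inr t => ((j : nat) == n + t)%:R
  end.

Local Notation V := (Vandermonde n (\row_i beta i)).

Lemma det_vandermonde_ext : \det vandermonde_ext = \det V.
Proof.
rewrite -[vandermonde_ext]submxK.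
have -> : ursubmx vandermonde_ext = 0.
  apply/matrixP => j t; rewrite !mxE (unsplitK (inr _ t)).
  by rewrite /= ltn_eqF // (leq_trans (ltn_ord j) (leq_addr _ _)).
have -> : drsubmx vandermonde_ext = 1%:M.
  by apply/matrixP => j t; rewrite !mxE (unsplitK (inr _ t)) /= eqn_add2l.
rewrite det_lblock det1 mulr1; congr (\det _).
by apply/matrixP => j i; rewrite !mxE (unsplitK (inl _ i)).
Qed.

Hypothesis sizeP : size P = n.+1.

Lemma sylvester_ext_dr (k t : 'I_m) :
  drsubmx (sylvester_band *m vandermonde_ext) k t = P`_(n + t - k) *+ (k <= n + t).
Proof.
rewrite !mxE (bigD1 (rshift n t)) //= big1 => [|j /negPf ne_j].
  by rewrite !mxE !(unsplitK (inr _ _)) /= eqxx mulr1 addr0.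
rewrite !mxE (unsplitK (inr _ t)); case: eqP => [e_j|]; last by rewrite mulr0.
by move: ne_j; rewrite -val_eqE /= e_j eqxx.
Qed.

Lemma det_sylvester_ext_dr :
  \det (drsubmx (sylvester_band *m vandermonde_ext)) = lead_coef P ^+ m.
Proof.
rewrite det_trig; last first.
  apply/forallP => k; apply/forallP => t; apply/implyP => lt_kt.
  rewrite sylvester_ext_dr nth_default ?mul0rn // sizeP; lia.
rewrite -[m in _ ^+ m]card_ord -prodr_const; apply: eq_bigr => t _.
by rewrite sylvester_ext_dr addnK leq_addl mulr1n lead_coefE sizeP.
Qed.

Hypothesis root_beta : forall i, root P (beta i).

(* The roots annihilate the lower-left block. *)
Lemma sylvester_ext_dl : dlsubmx (sylvester_band *m vandermonde_ext) = 0.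
Proof.
apply/matrixP => k i; rewrite !mxE.
under eq_bigr => j _ do rewrite !mxE (unsplitK (inr _ k)) (unsplitK (inl _ i)).
by rewrite horner_shift_sum ?(rootP (root_beta i)) ?mulr0 // sizeP; have := ltn_ord k; lia.
Qed.

Hypothesis sizeQ : (size Q <= m.+1)%N.

Lemma sylvester_ext_ul :
  ulsubmx (sylvester_band *m vandermonde_ext) = V *m diag_mx (\row_i Q.[beta i]).
Proof.
apply/matrixP => k i; rewrite mul_mx_diag !mxE.
under eq_bigr => j _ do rewrite !mxE (unsplitK (inl _ k)) (unsplitK (inl _ i)).
by rewrite horner_shift_sum ?mxE //; have := ltn_ord k; lia.
Qed.

(* Multiplying the Sylvester matrix by the completed Vandermonde matrix makes
   it block triangular, whence the classical formula
   Res(Q, P) * det V = det V * prod_i Q(beta_i) * lead(P)^m. *)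
Lemma det_sylvester_roots :
  \det sylvester_band * \det V =
  \det V * (\prod_i Q.[beta i]) * lead_coef P ^+ m.
Proof.
rewrite -{1}det_vandermonde_ext -det_mulmx -[_ *m _]submxK sylvester_ext_dl.
rewrite det_ublock sylvester_ext_ul det_sylvester_ext_dr det_mulmx det_diag.
by congr (_ * _ * _); apply: eq_bigr => i _; rewrite mxE.
Qed.

End SylvesterVandermonde.

Lemma map_Sylvester_mx (R : nzRingType) (F : fieldType) (f : {rmorphism R -> F})
    (P Q : {poly R}) :
  map_mx f (Sylvester_mx Q P) =
  sylvester_band (size P).-1 (size Q).-1 (map_poly f P) (map_poly f Q).
Proof.
apply/matrixP => i j; rewrite mxE Sylvester_mxE mxE /=.
by case: split => k; rewrite rmorphMn coef_map.
Qed.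

(* Poisson's formula: the resultant Res(Q, P) is the product of the values of
   Q at the (distinct) roots of P, times a power of the leading coefficient of P.
   It is stated through an injective morphism into a field where P splits. *)
Lemma resultant_roots (R : nzRingType) (F : fieldType) (f : {rmorphism R -> F})
    (P Q : {poly R}) (beta : 'I_(size P).-1 -> F) :
  injective f -> P != 0 -> (forall i, root (map_poly f P) (beta i)) ->
  \det (Vandermonde (size P).-1 (\row_i beta i)) != 0 ->
  f (resultant Q P) =
  (\prod_i (map_poly f Q).[beta i]) * f (lead_coef P) ^+ (size Q).-1.
Proof.
move=> f_inj P_neq0 root_beta V_neq0.
have size_fP : size (map_poly f P) = (size P).-1.+1.
  by rewrite size_map_inj_poly ?rmorph0 // prednK // size_poly_gt0.
have size_fQ : (size (map_poly f Q) <= (size Q).-1.+1)%N.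
  by rewrite size_map_inj_poly ?rmorph0 // leqSpred.
apply: (mulIf V_neq0); rewrite /resultant -det_map_mx map_Sylvester_mx.
rewrite det_sylvester_roots // lead_coef_map_inj ?rmorph0 //.
by rewrite [RHS]mulrC mulrA.
Qed.

(* A divisor of the leading coefficient divides every coefficient of index at
   least the degree (all of which are zero except the leading one). *)
Lemma dvdz_coef_high (p : {poly int}) (d : int) (i : nat) :
  (d %| lead_coef p)%Z -> ((size p).-1 <= i)%N -> (d %| p`_i)%Z.
Proof.
move=> d_lead; rewrite leq_eqVlt => /orP[/eqP <- // | lt_i].
by rewrite nth_default ?dvdz0 // (leq_trans (leqSpred _) lt_i).
Qed.

(* The last column of the Sylvester matrix only involves the leading
   coefficients, so a common divisor of them divides the resultant. *)
Lemma dvdz_resultant (p q : {poly int}) (d : int) :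
  (0 < (size q).-1 + (size p).-1)%N ->
  (d %| lead_coef p)%Z -> (d %| lead_coef q)%Z -> (d %| resultant p q)%Z.
Proof.
move=> dS_gt0 d_p d_q; pose j0 := Ordinal (etrans (ltn_predL _) dS_gt0).
rewrite /resultant (expand_det_col _ j0); apply: rpred_sum => i _.
apply: dvdz_mulr; rewrite Sylvester_mxE /=.
(* The sizes are generalized so that lia sees each of them as a single atom. *)
case: splitP => -[k /= lt_k] _; rewrite -mulr_natr; apply: dvdz_mulr;
  apply: dvdz_coef_high => //; move: (size p) (size q) lt_k => sp sq; lia.
Qed.

Lemma irreducible_size (p : {poly int}) :
  irreducible_poly (map_poly (intr : int -> rat) p) -> (1 < size p)%N.
Proof. by case; rewrite size_map_inj_poly //; exact: intr_inj. Qed.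

Lemma size_deriv_num (R : numDomainType) (p : {poly R}) :
  size p^`() = (size p).-1.
Proof.
have [->|p_neq0] := eqVneq p 0; first by rewrite deriv0 size_poly0.
apply/eqP; rewrite eqn_leq -ltnS prednK ?size_poly_gt0 // lt_size_deriv //=.
case size_p: (size p) => [|[|d]] //=; rewrite ltnNge.
apply/negP => /leq_sizeP /(_ d (leqnn d)) /eqP.
rewrite coef_deriv mulrn_eq0 /=.
by have := p_neq0; rewrite -lead_coef_eq0 lead_coefE size_p => /negPf ->.
Qed.

Lemma irreducible_coprime_deriv (F : fieldType) (p : {poly F}) :
  irreducible_poly p -> p^`() != 0 -> coprimep p p^`().
Proof.
move=> [size_p irr_p] dp_neq0; apply/negPn/negP => not_coprime.
have gcd_p : gcdp p p^`() %= p := irr_p _ not_coprime (dvdp_gcdl _ _).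
have : p %| p^`() by rewrite -(eqp_dvdl _ gcd_p) dvdp_gcdr.
move/(dvdp_leq dp_neq0); rewrite leqNgt lt_size_deriv //.
by rewrite -size_poly_gt0 (ltn_trans _ size_p).
Qed.

Lemma deriv_root_neq0 (C : numClosedFieldType) (p : {poly int}) (b : C) :
  irreducible_poly (map_poly (intr : int -> rat) p) ->
  root (map_poly (intr : int -> C) p) b ->
  (map_poly (intr : int -> C) p)^`().[b] != 0.
Proof.
set pQ := map_poly _ p => irr_pQ root_b.
have dpQ_neq0 : pQ^`() != 0.
  by rewrite -size_poly_eq0 size_deriv_num -lt0n -subn1 subn_gt0; case: irr_pQ.
have ratr_intr (q : {poly int}) :
    map_poly (ratr : rat -> C) (map_poly intr q) = map_poly intr q.
  by rewrite -map_poly_comp; apply: eq_map_poly => x /=; rewrite ratr_int.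
have := irreducible_coprime_deriv irr_pQ dpQ_neq0.
rewrite -(coprimep_map (ratr : rat -> C)) deriv_map !ratr_intr -deriv_map.
by move=> coprime_pC; apply: coprimep_root coprime_pC root_b.
Qed.

Lemma prod_XsubC_roots (F : closedFieldType) (P : {poly F}) (N : nat) :
  size P = N.+1 -> exists beta : 'I_N -> F, P = lead_coef P *: \prod_i ('X - (beta i)%:P).
Proof.
move=> size_P; have [r def_P] := closed_field_poly_normal P.
have size_r : size r = N.
  have lead_P_neq0 : lead_coef P != 0 by rewrite lead_coef_eq0 -size_poly_gt0 size_P.
  have := congr1 (fun q : {poly F} => size q) def_P.
  by rewrite size_scale // size_prod_XsubC size_P => -[].
by exists (fun i => r`_i); rewrite {1}def_P (big_nth 0) size_r big_mkord.
Qed.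

Lemma root_split (F : fieldType) (N : nat) (a : F) (beta : 'I_N -> F) (i : 'I_N) :
  root (a *: \prod_j ('X - (beta j)%:P)) (beta i).
Proof.
by rewrite /root hornerZ horner_prod (bigD1 i) //= hornerXsubC subrr mul0r mulr0.
Qed.

Lemma deriv_at_root (F : fieldType) (N : nat) (a : F) (beta : 'I_N -> F) (i : 'I_N) :
  (a *: \prod_j ('X - (beta j)%:P))^`().[beta i] =
  a * \prod_(j | j != i) (beta i - beta j).
Proof.
rewrite (bigD1 i) //= derivZ derivM derivXsubC mul1r hornerZ hornerD hornerM.
rewrite hornerXsubC subrr mul0r addr0 horner_prod; congr (_ * _).
by apply: eq_bigr => j _; rewrite hornerXsubC.
Qed.

Lemma irreducible_split (C : numClosedFieldType) (p : {poly int}) :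
  irreducible_poly (map_poly (intr : int -> rat) p) ->
  exists2 beta : 'I_(size p).-1 -> C,
    map_poly intr p = (lead_coef p)%:~R *: \prod_i ('X - (beta i)%:P) &
    forall i, \prod_(j | j != i) (beta i - beta j) != 0.
Proof.
move=> irr_p; have size_p := irreducible_size irr_p.
have size_pC : size (map_poly (intr : int -> C) p) = (size p).-1.+1.
  by rewrite size_map_inj_poly ?prednK ?(ltnW size_p) //; exact: intr_inj.
have [beta def_pC] := prod_XsubC_roots size_pC.
rewrite lead_coef_map_inj // in def_pC; last exact: intr_inj.
exists beta => // i; have := root_split (lead_coef p)%:~R beta i.
rewrite -def_pC => /(deriv_root_neq0 irr_p).
by rewrite def_pC deriv_at_root mulf_eq0 negb_or => /andP[].
Qed.

(* If a nonzero integer r is divisible by a and |r| = |a| x, then x = |r / a|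
   is a norm of a nonzero integer, hence x >= 1. *)
Lemma norm_quotient_ge1 (R : numDomainType) (a r : int) (x : R) :
  r != 0 -> (a %| r)%Z -> `|r%:~R : R| = `|a%:~R : R| * x -> 1 <= x.
Proof.
move=> r_neq0 /dvdzP[d def_r]; move: r_neq0; rewrite def_r mulf_eq0 negb_or.
case/andP => d_neq0 a_neq0; rewrite intrM normrM mulrC => /mulfI.
rewrite normr_eq0 intr_eq0 => /(_ a_neq0) <-.
by rewrite -intr_norm ler1z -gtz0_ge1 normr_gt0.
Qed.

(* The product over ordered pairs of distinct roots of their distances; up to
   the leading coefficient this is the absolute value of the discriminant. *)
Definition root_gap_prod (C : numDomainType) (N : nat) (beta : 'I_N -> C) : C :=
  \prod_i \prod_(j | j != i) `|beta i - beta j|.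

(* The discriminant Res(p', p) / lead(p) of an integer polynomial irreducible
   over Q is a nonzero integer; in terms of the roots this reads
   |lead(p)|^(2N-2) * prod_(i <> j) |beta_i - beta_j| >= 1 with N = deg p. *)
Lemma discriminant_bound (C : numClosedFieldType) (p : {poly int}) :
  irreducible_poly (map_poly (intr : int -> rat) p) ->
  exists2 beta : 'I_(size p).-1 -> C,
    (forall i, root (map_poly intr p) (beta i)) &
    1 <= `|(lead_coef p)%:~R : C| ^+ (2 * (size p).-2) * root_gap_prod beta.
Proof.
move=> irr_p; have [beta def_pC gap_neq0] := irreducible_split C irr_p.
set N := (size p).-1 in beta def_pC gap_neq0 *; set a : C := (lead_coef p)%:~R in def_pC *.
set pC := map_poly (intr : int -> C) p in def_pC *.
have N_gt0 : (0 < N)%N by rewrite /N -subn1 subn_gt0 irreducible_size.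
have p_neq0 : p != 0 by rewrite -size_poly_gt0 (leq_trans N_gt0 (leq_pred _)).
have a_neq0 : a != 0 by rewrite intr_eq0 lead_coef_eq0.
have root_beta i : root pC (beta i) by rewrite def_pC root_split.
have dpC_beta i : pC^`().[beta i] = a * \prod_(j | j != i) (beta i - beta j).
  by rewrite def_pC deriv_at_root.
exists beta => //.
have V_neq0 : \det (Vandermonde N (\row_i beta i)) != 0.
  rewrite det_Vandermonde; apply/prodf_neq0 => i _; apply/prodf_neq0 => j lt_ij.
  move: (gap_neq0 j); rewrite !mxE (bigD1 i) ?neq_ltn ?lt_ij ?orbT //=.
  by rewrite mulf_eq0 negb_or => /andP[].
have size_dp : size p^`() = N := size_deriv_num p.
have res_roots : (resultant p^`() p)%:~R = (\prod_i pC^`().[beta i]) * a ^+ N.-1.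
  by rewrite (resultant_roots _ intr_inj p_neq0 root_beta V_neq0) -deriv_map size_dp.
apply: (norm_quotient_ge1 (a := lead_coef p) (r := resultant p^`() p)).
- rewrite -(intr_eq0 C) res_roots mulf_neq0 ?expf_neq0 //.
  by apply/prodf_neq0 => i _; rewrite dpC_beta mulf_neq0.
- apply: dvdz_resultant; rewrite ?size_dp ?dvdzz -/N ?addn_gt0 ?N_gt0 //.
  rewrite [lead_coef p^`()]lead_coefE size_dp coef_deriv prednK // -mulr_natr.
  by apply: dvdz_mulr; rewrite lead_coefE.
rewrite res_roots normrM normrX normr_prod /root_gap_prod.
under eq_bigr => i _ do rewrite dpC_beta normrM normr_prod.
rewrite big_split /= prodr_const card_ord -/a mulrAC -exprD.
have -> : (N + N.-1 = 1 + 2 * N.-1)%N by lia.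
by rewrite exprD expr1 mulrA.
Qed.

Lemma prod_offdiag_lt (R : numDomainType) (N : nat) (f : 'I_N -> 'I_N -> R) (K : R) :
  (1 < N)%N -> (forall i j, j != i -> 0 <= f i j < K) ->
  \prod_i \prod_(j | j != i) f i j < (K ^+ N.-1) ^+ N.
Proof.
move=> N_gt1 f_bound; pose i0 : 'I_N := Ordinal (ltnW N_gt1); pose i1 : 'I_N := Ordinal N_gt1.
have <- : \prod_(i < N) \prod_(j | j != i) K = (K ^+ N.-1) ^+ N.
  under eq_bigr => i _ do rewrite prodr_const cardC1 card_ord.
  by rewrite prodr_const card_ord.
apply: ltr_prod => [|i _]; first by apply/hasP; exists i0; rewrite ?mem_index_enum.
apply/andP; split; first by apply: prodr_ge0 => j /f_bound /andP[].
apply: ltr_prod => [|j /f_bound //]; apply/hasP.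
have [-> | ne_i] := eqVneq i i0; last by exists i0; rewrite ?mem_index_enum // eq_sym.
by exists i1; rewrite ?mem_index_enum // -val_eqE.
Qed.

Lemma far_root (C : numClosedFieldType) (N : nat) (beta : 'I_N -> C) (xi c A : C) :
  (1 < N)%N -> 0 <= c -> 0 <= A -> 1 <= A * root_gap_prod beta ->
  A * ((c *+ 2) ^+ N.-1) ^+ N <= 1 -> exists i, c <= `|xi - beta i|.
Proof.
move=> N_gt1 c_ge0 A_ge0 gap_ge1 A_small.
have [i far_i | near_all] := pickP (fun i => c <= `|xi - beta i|); first by exists i.
have near i : `|xi - beta i| < c by rewrite real_ltNge ?near_all ?ger0_real.
have gap_lt j i : j != i -> 0 <= `|beta i - beta j| < c *+ 2.
  move=> _; rewrite normr_ge0 mulr2n; apply: le_lt_trans (ler_distD xi _ _) _.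
  by rewrite distrC ltrD.
have A_gt0 : 0 < A.
  rewrite lt_def A_ge0 andbT; apply: contraTneq gap_ge1 => ->.
  by rewrite mul0r ler10.
suff : A * root_gap_prod beta < A * ((c *+ 2) ^+ N.-1) ^+ N.
  by move/(le_lt_trans gap_ge1)/lt_le_trans/(_ A_small); rewrite ltxx.
by rewrite ltr_pM2l // prod_offdiag_lt // => i j /gap_lt.
Qed.

Lemma lead_coef_le_heightZ (p : {poly int}) : `|lead_coef p| <= heightZ p.
Proof.
have [->|p_neq0] := eqVneq p 0; first by rewrite lead_coef0 /heightZ size_poly0 big_ord0.
have lt_deg : ((size p).-1 < size p)%N by rewrite prednK // size_poly_gt0.
exact: (le_bigmax 0 (fun i : 'I_(size p) => `|p`_i|) (Ordinal lt_deg)).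
Qed.

(* With K = H^(-2/n) and 0 <= A <= H: A^(2(n-1)) * K^(n(n-1)) = (A/H)^(2(n-1)) <= 1. *)
Lemma height_power_bound (C : numClosedFieldType) (n : nat) (A H : C) :
  (0 < n)%N -> 0 <= A -> A <= H ->
  A ^+ (2 * n.-1) * ((((n.-root H) ^+ 2)^-1) ^+ n.-1) ^+ n <= 1.
Proof.
move=> n_gt0 A_ge0 A_le_H; have H_ge0 := le_trans A_ge0 A_le_H.
rewrite exprAC exprVn [_ ^+ 2 ^+ n]exprAC (rootCK n_gt0) exprM -exprMn.
apply: exprn_ile1; first by rewrite mulr_ge0 ?invr_ge0 ?exprn_ge0.
have [->|H_neq0] := eqVneq H 0; first by rewrite expr0n invr0 mulr0 ler01.
rewrite ler_pdivrMr ?exprn_gt0 ?lt_def ?H_neq0 // mul1r !expr2.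
exact: ler_pM.
Qed.

Theorem mainTheorem6 (C : numClosedFieldType) (n : nat) (hn : (2 <= n)%N)
  (xi : C) (hxi : xi \is Num.real) (alpha : C) (p : {poly int})
  (hp : minpolyZ p alpha) (hdeg : size p = n.+1) :
  exists2 beta : C, root (map_poly (intr : int -> C) p) beta &
    2^-1 * ((n.-root ((heightZ p)%:~R : C)) ^+ 2)^-1 <= `|xi - beta|.
Proof.
case: hp => _ irr_p _; have n_gt0 : (0 < n)%N := ltnW hn.
move: (discriminant_bound C irr_p); rewrite hdeg /= => -[beta root_beta gap_ge1].
set H : C := (heightZ p)%:~R; set K := ((n.-root H) ^+ 2)^-1.
have lead_le_H : `|(lead_coef p)%:~R : C| <= H.
  by rewrite -intr_norm ler_int lead_coef_le_heightZ.
have K_ge0 : 0 <= K.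
  by rewrite invr_ge0 exprn_ge0 ?rootC_ge0 // (le_trans (normr_ge0 _) lead_le_H).
have twice_c : (2^-1 * K) *+ 2 = K.
  by rewrite -mulr_natl mulrA mulfV ?mul1r // pnatr_eq0.
have [i far_i] : exists i, 2^-1 * K <= `|xi - beta i|.
  apply: far_root hn _ _ gap_ge1 _.
  - by apply: mulr_ge0 _ K_ge0; rewrite invr_ge0.
  - by rewrite exprn_ge0.
  - by rewrite twice_c height_power_bound.
by exists (beta i).
Qed.
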